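(* Let $G$ and $H$ be finite simple graphs and $k$ an integer. Then $$\gamma^d_k(G\,\square\, H)\leq \min\{\gamma^d_k(G)\,n(H),\ \gamma^d_k(H)\,n(G)\}.$$
   Context: All graphs are finite and simple; $n(G)=|V_G|$. For $S\subseteq V_G$ and $v\in V_G$, $N_S(v)=\{u\in S: uv\in E_G\}$ and $\bar S=V_G\setminus S$. For an integer $k$, a nonempty $S\subseteq V_G$ is a global defensive $k$-alliance in $G$ if every vertex outside $S$ has a neighbor in $S$ and $|N_S(v)|\ge |N_{\bar S}(v)|+k$ for every $v\in S$; $\gamma^d_k(G)$ is the minimum size of such a set ($\infty$ if none exists, with $\infty\cdot n=\infty$). The Cartesian product $G\,\square\,H$ has vertex set $V_G\times V_H$, with $(g,h)\sim(g',h')$ iff either $g=g'$ and $hh'\in E_H$, or $gg'\in E_G$ and $h=h'$. *)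

From HB Require Import structures.
From mathcomp Require Import all_boot all_order all_algebra.
Set Implicit Arguments. Unset Strict Implicit. Unset Printing Implicit Defensive.

Definition simple_graph (T : finType) (e : rel T) : Prop :=
  symmetric e /\ irreflexive e.

Definition nbhd (T : finType) (e : rel T) (S : {set T}) (v : T) : {set T} :=
  [set u in S | e v u].

Definition gda (T : finType) (e : rel T) (k : int) (S : {set T}) : bool :=
  [&& S != set0,
      [forall v in ~: S, exists u in S, e v u] &
      [forall v in S, (#|nbhd e (~: S) v|%:Z + k <= #|nbhd e S v|%:Z)%R]].

(* gamma^d_k(G) : None encodes infinity (no alliance exists). *)
Definition gamma_dk (T : finType) (e : rel T) (k : int) : option nat :=
  if [exists S, gda e k S]
  then Some (\big[minn/#|T|]_(S : {set T} | gda e k S) #|S|)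
  else None.

Definition ole (a b : option nat) : bool :=
  match b, a with
  | None, _ => true
  | Some y, Some x => x <= y
  | Some _, None => false
  end.
Definition omul (a : option nat) (n : nat) : option nat :=
  match a with Some x => Some (x * n) | None => None end.
Definition omin (a b : option nat) : option nat :=
  match a, b with
  | Some x, Some y => Some (minn x y)
  | Some x, None => Some x
  | None, b => b
  end.

Definition cart_rel (T1 T2 : finType) (e1 : rel T1) (e2 : rel T2) : rel (T1 * T2) :=
  fun x y => ((x.1 == y.1) && e2 x.2 y.2) || (e1 x.1 y.1 && (x.2 == y.2)).

From mathcomp Require Import all_boot all_order all_algebra.
From mathcomp Require Import zify.

Set Implicit Arguments.
Unset Strict Implicit.
Unset Printing Implicit Defensive.

(* If S is a global defensive k-alliance of G, then S x V(H) is one of G □ H: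
   a vertex (g, h) with g in S sees, inside the layer G x {h}, exactly its
   G-neighbours, and its remaining neighbours (g, h') all lie in S x V(H), so
   the alliance inequality only improves; domination is checked inside the
   layer as well.  Hence γ^d_k(G □ H) <= γ^d_k(G) n(H), and the other bound
   follows by the symmetry (g, h) ↦ (h, g) of the Cartesian product. *)

Lemma ole_omin (a b c : option nat) : ole a b -> ole a c -> ole a (omin b c).
Proof. by case: a b c => [a|] [b|] [c|] //=; rewrite leq_min => -> ->. Qed.

Lemma bigmin_le (I : eqType) (r : seq I) (P : pred I) (F : I -> nat) x0 j :
  j \in r -> P j -> \big[minn/x0]_(i <- r | P i) F i <= F j.
Proof.
elim: r => // a r IHr; rewrite inE big_cons => /orP [/eqP <- -> | jr Pj].
  exact: geq_minl.
by case: (P a); rewrite ?(leq_trans (geq_minr _ _)) ?IHr.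
Qed.

Lemma alliance_ineqW (a b a' b' : nat) (k : int) :
  (a%:Z + k <= b%:Z)%R -> a' <= a -> b <= b' -> (a'%:Z + k <= b'%:Z)%R.
Proof. lia. Qed.

Section AllianceNumber.

Variables (T : finType) (e : rel T) (k : int).

Lemma gamma_dk_le_card (S : {set T}) : gda e k S -> ole (gamma_dk e k) (Some #|S|).
Proof.
move=> allS; rewrite /gamma_dk; case: existsP => [_ | []]; last by exists S.
exact: bigmin_le (mem_index_enum S) allS.
Qed.

Lemma gamma_dkP (x : nat) :
  gamma_dk e k = Some x -> exists2 S, gda e k S & #|S| <= x.
Proof.
rewrite /gamma_dk; case: existsP => // -[S0 allS0] [<-].
apply: (big_ind (fun m => exists2 S, gda e k S & #|S| <= m)).
- by exists S0; last exact: max_card.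
- move=> a b [Sa allSa Sa_le] [Sb allSb Sb_le].
  by case: leqP => _; [exists Sa | exists Sb].
- by move=> S allS; exists S.
Qed.

End AllianceNumber.

Lemma gamma_dk_le_omul (T T' : finType) (e : rel T) (e' : rel T') (k : int)
    (n : nat) (F : {set T} -> {set T'}) :
  (forall S, gda e k S -> gda e' k (F S)) -> (forall S, #|F S| <= #|S| * n) ->
  ole (gamma_dk e' k) (omul (gamma_dk e k) n).
Proof.
move=> allF cardF; case E: (gamma_dk e k) => [x|] //=.
have [S /allF /gamma_dk_le_card allFS S_le] := gamma_dkP E.
case: (gamma_dk e' k) allFS => //= y y_le.
by rewrite (leq_trans y_le) // (leq_trans (cardF S)) // leq_mul2r S_le orbT.
Qed.

Section Isomorphism.

Variables (T T' : finType) (e : rel T) (e' : rel T') (k : int).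
Variables (f : T -> T') (g : T' -> T).
Hypotheses (fK : cancel f g) (gK : cancel g f).
Hypothesis f_edge : forall x y, e' (f x) (f y) = e x y.

Lemma card_preimset_can (A : {set T'}) : #|f @^-1: A| = #|A|.
Proof.
rewrite -(card_imset A (can_inj gK)); congr #|pred_of_set _|.
apply/setP => x; rewrite inE; apply/idP/imsetP => [fx_A | [a a_A ->]].
  by exists (f x); rewrite ?fK.
by rewrite gK.
Qed.

Lemma nbhd_preimset (S : {set T'}) (v : T) :
  nbhd e (f @^-1: S) v = f @^-1: nbhd e' S (f v).
Proof. by apply/setP => u; rewrite !inE f_edge. Qed.

Lemma gda_preimset (S : {set T'}) : gda e' k S -> gda e k (f @^-1: S).
Proof.
case/and3P=> /set0Pn [s s_S] /forall_inP dom_S /forall_inP ineq_S.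
apply/and3P; split.
- by apply/set0Pn; exists (g s); rewrite inE gK.
- apply/forall_inP => v; rewrite !inE => fv_S.
  have /exists_inP [u u_S fv_u] : [exists u in S, e' (f v) u].
    by apply: dom_S; rewrite inE.
  by apply/exists_inP; exists (g u); rewrite ?inE -?f_edge gK.
- apply/forall_inP => v; rewrite inE => fv_S.
  by rewrite -preimsetC !nbhd_preimset !card_preimset_can ineq_S.
Qed.

End Isomorphism.

Section CartesianProduct.

Variables (T1 T2 : finType) (e1 : rel T1) (e2 : rel T2) (k : int).

Local Notation layer h := (fun u : T1 => (u, h)).

Lemma cart_rel_swap (x y : T1 * T2) :
  cart_rel e2 e1 (swap_pair x) (swap_pair y) = cart_rel e1 e2 x y.
Proof. by rewrite /cart_rel orbC andbC [X in _ || X]andbC. Qed.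

Lemma nbhd_cart_setXT_notin (A : {set T1}) (g : T1) (h : T2) : g \notin A ->
  nbhd (cart_rel e1 e2) (setX A [set: T2]) (g, h) = layer h @: nbhd e1 A g.
Proof.
move=> gNA; apply/setP => -[u h']; rewrite !inE /cart_rel /= andbT.
apply/idP/imsetP => [|[v]].
  case/andP=> u_A /orP [/andP [/eqP gu _] | /andP [g_u /eqP <-]].
    by rewrite gu u_A in gNA.
  by exists u; rewrite ?inE ?u_A.
by rewrite !inE => /andP [v_A g_v] [-> ->]; rewrite v_A g_v eqxx orbT.
Qed.

Lemma nbhd_cart_setXT_sup (A : {set T1}) (g : T1) (h : T2) :
  layer h @: nbhd e1 A g \subset nbhd (cart_rel e1 e2) (setX A [set: T2]) (g, h).
Proof.
apply/subsetP => x /imsetP [u]; rewrite !inE => /andP [u_A g_u] ->.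
by rewrite /cart_rel /= u_A g_u eqxx orbT.
Qed.

Lemma gda_cart_setXT (S : {set T1}) :
  0 < #|T2| -> gda e1 k S -> gda (cart_rel e1 e2) k (setX S [set: T2]).
Proof.
case/card_gt0P=> h0 _ /and3P [/set0Pn [s s_S] /forall_inP dom_S /forall_inP ineq_S].
have layer_inj (h : T2) : injective (layer h) by move=> u v [].
apply/and3P; split.
- by apply/set0Pn; exists (s, h0); rewrite !inE s_S.
- apply/forall_inP => -[g h]; rewrite !inE andbT => gNS.
  have /exists_inP [u u_S g_u] : [exists u in S, e1 g u].
    by apply: dom_S; rewrite inE.
  by apply/exists_inP; exists (u, h); rewrite ?inE ?u_S // /cart_rel /= g_u eqxx orbT.
- apply/forall_inP => -[g h]; rewrite !inE andbT => g_S.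
  have -> : ~: setX S [set: T2] = setX (~: S) [set: T2].
    by apply/setP => -[u v]; rewrite !inE ?andbT.
  apply: (alliance_ineqW (ineq_S g g_S)).
    by rewrite nbhd_cart_setXT_notin ?inE ?g_S // (card_imset _ (layer_inj h)).
  by rewrite -(card_imset _ (layer_inj h)) subset_leq_card ?nbhd_cart_setXT_sup.
Qed.

End CartesianProduct.

Theorem mainTheorem2 (T1 T2 : finType) (e1 : rel T1) (e2 : rel T2) (k : int)
  (hG : simple_graph e1) (hH : simple_graph e2)
  (hT1 : 0 < #|T1|) (hT2 : 0 < #|T2|) :
  ole (gamma_dk (cart_rel e1 e2) k)
      (omin (omul (gamma_dk e1 k) #|T2|) (omul (gamma_dk e2 k) #|T1|)).
Proof.
apply: ole_omin.
  apply: (gamma_dk_le_omul (F := fun S => setX S [set: T2])) => S.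
    exact: gda_cart_setXT.
  by rewrite cardsX cardsT.
apply: (gamma_dk_le_omul (F := fun S => swap_pair @^-1: setX S [set: T1])) => S.
  move/(gda_cart_setXT e1 hT1).
  by apply: (gda_preimset _ _ (cart_rel_swap e1 e2)); apply: swap_pairK.
by rewrite (card_preimset_can swap_pairK swap_pairK) cardsX cardsT.
Qed.
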